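(* Let $C$ be a linear $[n,k,d]_q$ code with covering radius $\rho=1$. If $\mathrm{Aut}(C)$ is transitive, then $C$ is completely transitive.
   Context: Covering radius $\rho=\max_{{\bf v}\in\mathbb{F}_q^n}\min_{{\bf x}\in C}d({\bf v},{\bf x})$ (Hamming distance). A linear automorphism of $\mathbb{F}_q^n$ is ${\bf x}\mapsto{\bf x}M$ for an $n\times n$ monomial matrix $M$. $\mathrm{Aut}(C)$ is the group of linear automorphisms leaving $C$ invariant; it is transitive if it acts transitively on the weight-one vectors of $\mathbb{F}_q^n$. $\mathrm{Aut}(C)$ acts on cosets of $C$ by $\phi({\bf v}+C)=\phi({\bf v})+C$, and $C$ is completely transitive if this action has exactly $\rho+1$ orbits. *)

From HB Require Import structures.
From mathcomp Require Import all_boot all_order all_algebra all_field.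
Set Implicit Arguments. Unset Strict Implicit. Unset Printing Implicit Defensive.
Import GRing.Theory.
Local Open Scope ring_scope.

Section Codes.
Variables (F : finFieldType) (n : nat).

Definition hdist (u v : 'rV[F]_n) : nat := #|[set i : 'I_n | u 0 i != v 0 i]|.
Definition hwt (u : 'rV[F]_n) : nat := #|[set i : 'I_n | u 0 i != 0]|.

(* covering radius: max over v of min over codewords x of d(v,x)
   (the code is nonempty, so the min over C is attained; n is a neutral
   upper bound since all distances are <= n) *)
Definition covering_radius (C : {vspace 'rV[F]_n}) : nat :=
  \max_(v : 'rV[F]_n) \big[minn/n]_(x : 'rV[F]_n | x \in C) hdist v x.

Definition monomial (M : 'M[F]_n) : bool :=
  [forall i, #|[set j | M i j != 0]| == 1%N] &&
  [forall j, #|[set i | M i j != 0]| == 1%N].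

Definition code_set (C : {vspace 'rV[F]_n}) : {set 'rV[F]_n} :=
  [set x | x \in C].

Definition Aut (C : {vspace 'rV[F]_n}) : {set 'M[F]_n} :=
  [set M | monomial M & [set x *m M | x in code_set C] == code_set C].

Definition aut_transitive (C : {vspace 'rV[F]_n}) : Prop :=
  forall u v : 'rV[F]_n, hwt u = 1%N -> hwt v = 1%N ->
    exists2 M, M \in Aut C & u *m M = v.

Definition coset (C : {vspace 'rV[F]_n}) (v : 'rV[F]_n) : {set 'rV[F]_n} :=
  [set v + x | x in code_set C].

Definition cosets (C : {vspace 'rV[F]_n}) : {set {set 'rV[F]_n}} :=
  [set coset C v | v : 'rV[F]_n].

Definition act_set (M : 'M[F]_n) (K : {set 'rV[F]_n}) : {set 'rV[F]_n} :=
  [set y *m M | y in K].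

Definition coset_orbit (C : {vspace 'rV[F]_n}) (K : {set 'rV[F]_n})
  : {set {set 'rV[F]_n}} := [set act_set M K | M in Aut C].

Definition num_coset_orbits (C : {vspace 'rV[F]_n}) : nat :=
  #|[set coset_orbit C K | K in cosets C]|.

Definition completely_transitive (C : {vspace 'rV[F]_n}) : Prop :=
  num_coset_orbits C = (covering_radius C).+1.

End Codes.

From HB Require Import structures.
From mathcomp Require Import all_boot all_order all_algebra all_field.
Set Implicit Arguments. Unset Strict Implicit. Unset Printing Implicit Defensive.
Import GRing.Theory.

(* With covering radius 1, every coset outside C contains a vector of weight
   one (a coset leader), and a transitive automorphism group maps any weight-one
   vector to any other, hence any such coset to any other.  Since automorphisms
   fix C itself, there are exactly two orbits on cosets: that of C and that of
   the cosets of weight-one vectors. *)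

(* Makes [bigD1] available for minima over [nat], whose default [m] need not
   be neutral for [minn]. *)
HB.instance Definition _ := SemiGroup.isComLaw.Build nat minn minnA minnC.

Lemma geq_bigmin (I : finType) (P : pred I) (F : I -> nat) m i :
  P i -> (\big[minn/m]_(j | P j) F j <= F i)%N.
Proof. by move=> Pi; rewrite (bigD1 i) //= geq_minl. Qed.

Lemma bigmin_leq_witness (I : finType) (P : pred I) (F : I -> nat) m r :
  (\big[minn/m]_(j | P j) F j <= r)%N -> (m <= r)%N \/ exists2 i, P i & (F i <= r)%N.
Proof.
elim/big_rec: _ => [|i y Pi IHy]; first by left.
rewrite geq_min => /orP[Fi|/IHy //]; by right; exists i.
Qed.

Section Monomial.
Variables (F : finFieldType) (n : nat).
Local Open Scope ring_scope.

Lemma card_support1P (f : 'I_n -> F) :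
  reflect (exists j0, forall j, (f j != 0) = (j == j0))
          (#|[set j | f j != 0]| == 1%N).
Proof.
apply: (iffP cards1P) => -[j0 Hj0]; exists j0.
  by move=> j; move/setP/(_ j): Hj0; rewrite !inE.
by apply/setP => j; rewrite !inE Hj0.
Qed.

Lemma mulmx_support1l (M N : 'M[F]_n) i j j0 :
  (forall k, (M i k != 0) = (k == j0)) -> (M *m N) i j = M i j0 * N j0 j.
Proof.
move=> Mi; rewrite mxE (bigD1 j0) //= big1 ?addr0 // => k /negbTE k_j0.
by move: (Mi k); rewrite k_j0 => /negbFE/eqP ->; rewrite mul0r.
Qed.

Lemma mulmx_support1r (M N : 'M[F]_n) i j i0 :
  (forall k, (N k j != 0) = (k == i0)) -> (M *m N) i j = M i i0 * N i0 j.
Proof.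
move=> Nj; rewrite mxE (bigD1 i0) //= big1 ?addr0 // => k /negbTE k_i0.
by move: (Nj k); rewrite k_i0 => /negbFE/eqP ->; rewrite mulr0.
Qed.

Lemma monomial_mul (M N : 'M[F]_n) :
  monomial M -> monomial N -> monomial (M *m N).
Proof.
move=> /andP[/forallP rowM /forallP colM] /andP[/forallP rowN /forallP colN].
apply/andP; split; apply/forallP.
- move=> i; have /card_support1P[j0 Mi] := rowM i.
  suff -> : [set j | (M *m N) i j != 0] = [set j | N j0 j != 0] by exact: rowN.
  by apply/setP => j; rewrite !inE (mulmx_support1l _ _ Mi) mulf_eq0 negb_or Mi eqxx.
- move=> j; have /card_support1P[i0 Nj] := colN j.
  suff -> : [set i | (M *m N) i j != 0] = [set i | M i i0 != 0] by exact: colM.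
  by apply/setP => i; rewrite !inE (mulmx_support1r _ _ Nj) mulf_eq0 negb_or Nj eqxx andbT.
Qed.

Lemma monomial1 : monomial (1%:M : 'M[F]_n).
Proof.
apply/andP; split; apply/forallP => i; apply/card_support1P; exists i => j;
  by rewrite mxE ?[i == j]eq_sym; case: (j == i); rewrite ?oner_eq0 ?eqxx.
Qed.

End Monomial.

Section Hamming.
Variables (F : finFieldType) (n : nat).
Local Open Scope ring_scope.
Implicit Types u v w : 'rV[F]_n.

Lemma hdistE u v : hdist u v = hwt (u - v).
Proof. by apply: eq_card => i; rewrite !inE !mxE subr_eq0. Qed.

Lemma hwt_eq0 w : (hwt w == 0%N) = (w == 0).
Proof.
rewrite cards_eq0; apply/eqP/eqP => [w0|->]; last by apply/setP => i; rewrite !inE mxE eqxx.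
by apply/rowP => i; rewrite mxE; apply/eqP; move/setP/(_ i): w0; rewrite !inE => /negbFE.
Qed.

Lemma hdist_leq u v : (hdist u v <= n)%N.
Proof. by rewrite -[X in (_ <= X)%N]card_ord max_card. Qed.

Lemma hdistxx v : hdist v v = 0%N.
Proof. by apply/eqP; rewrite hdistE subrr hwt_eq0. Qed.

End Hamming.

Section Cosets.
Variables (F : finFieldType) (n : nat) (C : {vspace 'rV[F]_n}).
Local Open Scope ring_scope.
Implicit Types (v w x : 'rV[F]_n) (M N : 'M[F]_n) (K : {set 'rV[F]_n}).

Lemma mem_code_set x : (x \in code_set C) = (x \in C).
Proof. by rewrite inE. Qed.

Lemma mem_coset v : v \in coset C v.
Proof. by apply/imsetP; exists 0; rewrite ?addr0 ?mem_code_set ?mem0v. Qed.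

Lemma coset_eq v w : v - w \in C -> coset C v = coset C w.
Proof.
move=> vwC; apply/setP => y; apply/imsetP/imsetP => -[x]; rewrite mem_code_set.
- move=> xC ->; exists (v - w + x); first by rewrite mem_code_set memvD.
  by rewrite addrA addrCA addrN addr0.
- move=> xC ->; exists (x - (v - w)); first by rewrite mem_code_set memvB.
  by rewrite addrCA opprB subrKC addrC.
Qed.

Lemma coset0 : coset C 0 = code_set C.
Proof.
apply/setP => y; apply/imsetP/idP => [[x Cx ->]|Cy]; first by rewrite add0r.
by exists y; rewrite ?add0r.
Qed.

Lemma coset_code_set v : (coset C v == code_set C) = (v \in C).
Proof.
apply/eqP/idP => [vC|vC]; first by rewrite -mem_code_set -vC mem_coset.
by rewrite -coset0; apply: coset_eq; rewrite subr0.
Qed.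

Lemma coset_in_cosets v : coset C v \in cosets C.
Proof. by apply/imsetP; exists v. Qed.

Lemma act_set_mul M N K : act_set (M *m N) K = act_set N (act_set M K).
Proof.
apply/setP => y; apply/imsetP/imsetP => [[x Kx ->]|[z /imsetP[x Kx ->] ->]].
  by exists (x *m M); rewrite ?mulmxA //; apply/imsetP; exists x.
by exists x; rewrite ?mulmxA.
Qed.

Lemma act_set1 K : act_set 1%:M K = K.
Proof.
apply/setP => y; apply/imsetP/idP => [[x Kx ->]|Ky]; first by rewrite mulmx1.
by exists y; rewrite ?mulmx1.
Qed.

Lemma Aut1 : 1%:M \in Aut C.
Proof. by rewrite inE monomial1 /=; apply/eqP/act_set1. Qed.

Lemma Aut_mul M N : M \in Aut C -> N \in Aut C -> M *m N \in Aut C.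
Proof.
rewrite !inE => /andP[monoM /eqP MC] /andP[monoN /eqP NC].
by rewrite monomial_mul //=; apply/eqP; rewrite [LHS]act_set_mul /act_set MC NC.
Qed.

Lemma act_coset M v : M \in Aut C -> act_set M (coset C v) = coset C (v *m M).
Proof.
rewrite inE => /andP[_ /eqP MC]; apply/setP => y.
apply/imsetP/imsetP => [[z /imsetP[x Cx ->] ->]|[x']].
  by exists (x *m M); rewrite ?mulmxDl // -MC; apply/imsetP; exists x.
by rewrite -MC => /imsetP[x Cx ->] ->; exists (v + x); [exact: imset_f | rewrite mulmxDl].
Qed.

Lemma coset_orbitS M K :
  M \in Aut C -> coset_orbit C (act_set M K) \subset coset_orbit C K.
Proof.
move=> AutM; apply/subsetP => _ /imsetP[N AutN ->].
by apply/imsetP; exists (M *m N); rewrite ?Aut_mul ?act_set_mul.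
Qed.

Lemma coset_orbit_id K : K \in coset_orbit C K.
Proof. by apply/imsetP; exists 1%:M; rewrite ?Aut1 ?act_set1. Qed.

Lemma coset_orbit_code : coset_orbit C (code_set C) = [set code_set C].
Proof.
apply/setP => L; rewrite inE; apply/idP/eqP => [|->]; last exact: coset_orbit_id.
by case/imsetP=> M; rewrite inE => /andP[_ /eqP MC] ->.
Qed.

Lemma coset_orbit_transitive :
  aut_transitive C -> forall e1 e2, hwt e1 = 1%N -> hwt e2 = 1%N ->
  coset_orbit C (coset C e1) = coset_orbit C (coset C e2).
Proof.
move=> transC e1 e2 wt_e1 wt_e2.
have [M AutM e1M] := transC _ _ wt_e1 wt_e2.
have [N AutN e2N] := transC _ _ wt_e2 wt_e1.
apply/eqP; rewrite eqEsubset; apply/andP; split; [rewrite -e2N | rewrite -e1M];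
  by rewrite -act_coset ?coset_orbitS.
Qed.

Lemma near_codeword v : exists2 x, x \in C & (hdist v x <= covering_radius C)%N.
Proof.
(* The default [n] of the inner minimum is harmless: every distance is at most [n]. *)
have /bigmin_leq_witness[n_le|//] :=
  leq_bigmax (F := fun v => \big[minn/n]_(x | x \in C) hdist v x) v.
by exists 0; rewrite ?mem0v ?(leq_trans (hdist_leq _ _)).
Qed.

Lemma coset_leader v :
  exists2 e, (hwt e <= covering_radius C)%N & coset C v = coset C e.
Proof.
have [x Cx dvx] := near_codeword v.
exists (v - x); first by rewrite -hdistE.
by apply: coset_eq; rewrite opprB subrKC.
Qed.

Lemma exists_notin_code : (0 < covering_radius C)%N -> exists v, v \notin C.
Proof.
move=> rho_gt0; apply/existsP; apply: contraTT rho_gt0 => /existsPn fullC.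
rewrite -leqNgt; apply/bigmax_leqP => v _.
by apply: leq_trans (geq_bigmin _ _ (negbNE (fullC v))) _; rewrite hdistxx.
Qed.

Lemma coset_orbit_code_neq v :
  v \notin C -> coset_orbit C (code_set C) != coset_orbit C (coset C v).
Proof.
apply: contraNneq => orbitE; have := coset_orbit_id (coset C v).
by rewrite -orbitE coset_orbit_code inE coset_code_set.
Qed.

Section CoveringRadiusOne.
Hypothesis rhoC : covering_radius C = 1%N.

Lemma coset_weight1 v :
  v \notin C -> exists2 e, hwt e = 1%N & coset C v = coset C e.
Proof.
move=> vNC; have [e wt_e ve] := coset_leader v; exists e => //.
apply/eqP; rewrite eqn_leq -{1}rhoC wt_e /= lt0n hwt_eq0.
by apply: contraNneq vNC => e0; rewrite -coset_code_set ve e0 coset0.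
Qed.

Lemma coset_orbits_weight1 e0 : aut_transitive C -> hwt e0 = 1%N ->
  [set coset_orbit C K | K in cosets C] =
  [set coset_orbit C (code_set C); coset_orbit C (coset C e0)].
Proof.
move=> transC wt_e0; apply/setP => L; rewrite !inE.
apply/imsetP/orP => [[_ /imsetP[v _ ->] ->]|].
  have [vC|/coset_weight1[e wt_e ->]] := boolP (v \in C).
    by left; move: vC; rewrite -coset_code_set => /eqP ->.
  by right; rewrite (coset_orbit_transitive transC wt_e wt_e0).
case=> /eqP->; last by exists (coset C e0); rewrite ?coset_in_cosets.
by exists (coset C 0); rewrite ?coset_in_cosets ?coset0.
Qed.

End CoveringRadiusOne.

End Cosets.

Theorem lemma1p5 (F : finFieldType) (n k : nat) (C : {vspace 'rV[F]_n}) :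
  \dim C = k ->
  covering_radius C = 1%N ->
  aut_transitive C ->
  completely_transitive C.
Proof.
move=> _ rhoC transC.
have [v0 v0NC] : exists v, v \notin C by apply: exists_notin_code; rewrite rhoC.
have [e0 wt_e0 v0e0] := coset_weight1 rhoC v0NC.
rewrite /completely_transitive /num_coset_orbits rhoC.
by rewrite (coset_orbits_weight1 rhoC transC wt_e0) cards2 -v0e0 coset_orbit_code_neq.
Qed.
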